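(* Let $(p(n))_{n\ge1}$ and $(q(n))_{n\ge1}$ be nonnegative sequences in $\ell^1$ and let $(g(n))_{n\ge1}$ be a real sequence. Suppose $p(1)\le g(1)$ and $$p(i)\le\sum_{j=1}^{i-1}q(i-j)p(j)+g(i)\qquad\text{for all } i\ge2 .$$ Define $q^{*1}=q$ and, for $k\ge2$, $q^{*k}(i)=\sum_{m=1}^{i-1}q^{*(k-1)}(m)\,q(i-m)$, and $Q(i)=\sum_{k=1}^\infty q^{*k}(i)$. Then $$p(i)\le\sum_{j=1}^{i-1}Q(i-j)g(j)+g(i)\qquad\text{for all } i\ge2 .$$ *)

(* real sequences nat -> R (index 0 unused), Coquelicot series. *)
From Stdlib Require Import Reals List.
From Coquelicot Require Import Coquelicot.
Open Scope R_scope.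

Definition sum_1_to (n : nat) (f : nat -> R) : R :=
  fold_right Rplus 0 (map f (seq 1 n)).

(* qstar q k = q^{*k} for k >= 1 (qstar q 0 is an unused dummy):
   q^{*1} = q,  q^{*k}(i) = sum_{m=1}^{i-1} q^{*(k-1)}(m) q(i-m). *)
Fixpoint qstar (q : nat -> R) (k : nat) (i : nat) : R :=
  match k with
  | O => 0
  | S k' =>
      match k' with
      | O => q i
      | S _ => sum_1_to (i - 1) (fun m => qstar q k' m * q (i - m)%nat)
      end
  end.

Definition Qsum (q : nat -> R) (i : nat) : R :=
  Series (fun k => qstar q (S k) i).

(** The convolution powers satisfy q^{*k}(i) = 0 for k > i, so Q(i) is a finite sum and
    Q = q + q * Q (renewal equation, with * the convolution below).  Writing the claim as
    p <= Q * g + g, strong induction on i gives, using q >= 0,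
    p <= q * p + g <= q * (Q * g + g) + g = (q * Q + q) * g + g = Q * g + g,
    where the middle equality is associativity of the convolution. *)

From Stdlib Require Import Reals List Arith Lia Lra.
From Coquelicot Require Import Coquelicot.
Open Scope R_scope.

Lemma sum_1_to_S (n : nat) (f : nat -> R) :
  sum_1_to (S n) f = sum_1_to n f + f (S n).
Proof.
  unfold sum_1_to. rewrite seq_S, map_app, fold_right_app. simpl.
  rewrite Rplus_0_r. generalize (f (S n)) as x.
  induction (map f (seq 1 n)) as [|a l IH]; intros x; simpl.
  - ring.
  - rewrite IH. ring.
Qed.

Lemma sum_1_to_Sl (n : nat) (f : nat -> R) :
  sum_1_to (S n) f = f 1%nat + sum_1_to n (fun k => f (S k)).
Proof.
  unfold sum_1_to. simpl. f_equal.
  rewrite <- seq_shift, map_map. reflexivity.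
Qed.

Lemma sum_1_to_ext (n : nat) (f g : nat -> R) :
  (forall k, (1 <= k <= n)%nat -> f k = g k) -> sum_1_to n f = sum_1_to n g.
Proof.
  induction n as [|n IH]; intros H; [reflexivity|].
  rewrite !sum_1_to_S, H by lia. f_equal.
  apply IH. intros k Hk. apply H. lia.
Qed.

Lemma sum_1_to_le (n : nat) (f g : nat -> R) :
  (forall k, (1 <= k <= n)%nat -> f k <= g k) -> sum_1_to n f <= sum_1_to n g.
Proof.
  induction n as [|n IH]; intros H; [apply Rle_refl|].
  rewrite !sum_1_to_S. apply Rplus_le_compat.
  - apply IH. intros k Hk. apply H. lia.
  - apply H. lia.
Qed.

Lemma sum_1_to_plus (n : nat) (f g : nat -> R) :
  sum_1_to n (fun k => f k + g k) = sum_1_to n f + sum_1_to n g.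
Proof.
  induction n as [|n IH]; [unfold sum_1_to; simpl; ring|].
  rewrite !sum_1_to_S, IH. ring.
Qed.

Lemma sum_1_to_scal_l (n : nat) (c : R) (f : nat -> R) :
  sum_1_to n (fun k => c * f k) = c * sum_1_to n f.
Proof.
  induction n as [|n IH]; [unfold sum_1_to; simpl; ring|].
  rewrite !sum_1_to_S, IH. ring.
Qed.

Lemma sum_1_to_zero (n : nat) : sum_1_to n (fun _ => 0) = 0.
Proof.
  induction n as [|n IH]; [reflexivity|].
  rewrite sum_1_to_S, IH. ring.
Qed.

Lemma sum_1_to_swap (n m : nat) (F : nat -> nat -> R) :
  sum_1_to n (fun j => sum_1_to m (F j)) = sum_1_to m (fun l => sum_1_to n (fun j => F j l)).
Proof.
  induction n as [|n IH].
  - symmetry. apply sum_1_to_zero.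
  - rewrite sum_1_to_S, IH, <- sum_1_to_plus.
    apply sum_1_to_ext. intros l _. rewrite sum_1_to_S. reflexivity.
Qed.

(* Both sides sum F j l over the pairs 1 <= l < j <= n, the right one with j = l + t. *)
Lemma sum_1_to_triangle (n : nat) (F : nat -> nat -> R) :
  sum_1_to n (fun j => sum_1_to (j - 1) (F j))
  = sum_1_to n (fun l => sum_1_to (n - l) (fun t => F (l + t)%nat l)).
Proof.
  induction n as [|n IH]; [reflexivity|].
  rewrite sum_1_to_S, IH. replace (S n - 1)%nat with n by lia.
  rewrite sum_1_to_S, Nat.sub_diag, Rplus_0_r, <- sum_1_to_plus.
  apply sum_1_to_ext. intros l Hl.
  replace (S n - l)%nat with (S (n - l)) by lia.
  rewrite sum_1_to_S. do 3 f_equal. lia.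
Qed.

Lemma sum_n_succ_sum_1_to (N : nat) (f : nat -> R) :
  sum_n (fun k => f (S k)) N = sum_1_to (S N) f.
Proof.
  induction N as [|N IH].
  - rewrite sum_O, sum_1_to_S. symmetry. apply Rplus_0_l.
  - rewrite sum_Sn, IH, (sum_1_to_S (S N)). reflexivity.
Qed.

Lemma Series_eventually_0 (a : nat -> R) (N : nat) :
  (forall k, (N < k)%nat -> a k = 0) -> Series a = sum_n a N.
Proof.
  intros Ha. apply is_series_unique. change (is_lim_seq (sum_n a) (sum_n a N)).
  apply is_lim_seq_ext_loc with (fun _ => sum_n a N); [|apply is_lim_seq_const].
  exists N. intros n Hn. induction Hn as [|n Hn IH]; [reflexivity|].
  rewrite sum_Sn, <- IH, Ha by lia. symmetry. apply Rplus_0_r.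
Qed.

Definition conv (a b : nat -> R) (i : nat) : R :=
  sum_1_to (i - 1) (fun j => a (i - j)%nat * b j).

Lemma conv_ext (a a' b b' : nat -> R) (i : nat) :
  (forall m, (1 <= m < i)%nat -> a m = a' m) ->
  (forall m, (1 <= m < i)%nat -> b m = b' m) ->
  conv a b i = conv a' b' i.
Proof.
  intros Ha Hb. apply sum_1_to_ext. intros j Hj.
  rewrite Ha, Hb by lia. reflexivity.
Qed.

Lemma conv_le_r (a b b' : nat -> R) (i : nat) :
  (forall m, (1 <= m < i)%nat -> 0 <= a m) ->
  (forall m, (1 <= m < i)%nat -> b m <= b' m) ->
  conv a b i <= conv a b' i.
Proof.
  intros Ha Hb. apply sum_1_to_le. intros j Hj.
  apply Rmult_le_compat_l; [apply Ha | apply Hb]; lia.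
Qed.

Lemma conv_plus_l (a a' b : nat -> R) (i : nat) :
  conv (fun m => a m + a' m) b i = conv a b i + conv a' b i.
Proof.
  unfold conv. rewrite <- sum_1_to_plus.
  apply sum_1_to_ext. intros. ring.
Qed.

Lemma conv_plus_r (a b b' : nat -> R) (i : nat) :
  conv a (fun m => b m + b' m) i = conv a b i + conv a b' i.
Proof.
  unfold conv. rewrite <- sum_1_to_plus.
  apply sum_1_to_ext. intros. ring.
Qed.

Lemma conv_sum_1_to_r (a : nat -> R) (F : nat -> nat -> R) (n i : nat) :
  conv a (fun m => sum_1_to n (fun k => F k m)) i = sum_1_to n (fun k => conv a (F k) i).
Proof.
  unfold conv. rewrite sum_1_to_swap.
  apply sum_1_to_ext. intros j _. symmetry. apply sum_1_to_scal_l.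
Qed.

Lemma conv_assoc (a b c : nat -> R) (i : nat) :
  conv a (conv b c) i = conv (conv a b) c i.
Proof.
  unfold conv at 1.
  transitivity (sum_1_to (i - 1)
    (fun j => sum_1_to (j - 1) (fun l => a (i - j)%nat * b (j - l)%nat * c l))).
  { apply sum_1_to_ext. intros j _. unfold conv. rewrite <- sum_1_to_scal_l.
    apply sum_1_to_ext. intros. ring. }
  rewrite sum_1_to_triangle. apply sum_1_to_ext. intros l Hl.
  unfold conv. replace (i - l - 1)%nat with (i - 1 - l)%nat by lia.
  rewrite Rmult_comm, <- sum_1_to_scal_l.
  apply sum_1_to_ext. intros t Ht.
  replace (l + t - l)%nat with t by lia.
  replace (i - (l + t))%nat with (i - l - t)%nat by lia. ring.
Qed.

Lemma conv_resolvent (q Q g : nat -> R) (i : nat) :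
  (forall m, (1 <= m < i)%nat -> Q m = q m + conv q Q m) ->
  conv q (fun j => conv Q g j + g j) i = conv Q g i.
Proof.
  intros HQ.
  rewrite conv_plus_r, conv_assoc, <- conv_plus_l.
  apply conv_ext; [|reflexivity].
  intros m Hm. rewrite HQ by lia. ring.
Qed.

Lemma qstar_S (q : nat -> R) (k i : nat) :
  (1 <= k)%nat -> qstar q (S k) i = conv q (qstar q k) i.
Proof.
  intros Hk. destruct k as [|k]; [lia|].
  apply sum_1_to_ext. intros. apply Rmult_comm.
Qed.

Lemma qstar_eq_0 (q : nat -> R) (k i : nat) :
  (1 <= i)%nat -> (i < k)%nat -> qstar q k i = 0.
Proof.
  revert i. induction k as [|k IH]; intros i Hi Hik; [lia|].
  rewrite qstar_S by lia. unfold conv.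
  rewrite <- (sum_1_to_zero (i - 1)).
  apply sum_1_to_ext. intros j Hj. rewrite IH by lia. ring.
Qed.

Lemma Qsum_partial (q : nat -> R) (N i : nat) :
  (1 <= i <= N)%nat -> Qsum q i = sum_1_to N (fun k => qstar q k i).
Proof.
  intros Hi. destruct N as [|N]; [lia|].
  unfold Qsum. rewrite (Series_eventually_0 _ N).
  - exact (sum_n_succ_sum_1_to N (fun k => qstar q k i)).
  - intros k Hk. apply qstar_eq_0; lia.
Qed.

Lemma Qsum_renewal (q : nat -> R) (m : nat) :
  (1 <= m)%nat -> Qsum q m = q m + conv q (Qsum q) m.
Proof.
  intros Hm. rewrite (Qsum_partial q m m) by lia.
  replace m with (S (m - 1)) at 1 by lia.
  rewrite sum_1_to_Sl. f_equal.
  transitivity (sum_1_to (m - 1) (fun k => conv q (qstar q k) m)).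
  { apply sum_1_to_ext. intros k Hk. apply qstar_S. lia. }
  rewrite <- conv_sum_1_to_r. apply conv_ext; [reflexivity|].
  intros t Ht. symmetry. apply Qsum_partial. lia.
Qed.

Theorem mainTheorem3 (p q g : nat -> R)
  (hp0 : forall n, (1 <= n)%nat -> 0 <= p n)
  (hq0 : forall n, (1 <= n)%nat -> 0 <= q n)
  (hp1 : ex_series p) (hq1 : ex_series q)
  (hbase : p 1%nat <= g 1%nat)
  (hrec : forall i, (2 <= i)%nat ->
     p i <= sum_1_to (i - 1) (fun j => q (i - j)%nat * p j) + g i) :
  forall i, (2 <= i)%nat ->
     p i <= sum_1_to (i - 1) (fun j => Qsum q (i - j)%nat * g j) + g i.
Proof.
  enough (H : forall i, (1 <= i)%nat -> p i <= conv (Qsum q) g i + g i).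
  { intros i Hi. apply H. lia. }
  intros i. induction i as [i IH] using lt_wf_ind. intros Hi.
  destruct (Nat.eq_dec i 1) as [->|Hi1].
  { change (conv (Qsum q) g 1%nat) with 0. lra. }
  apply Rle_trans with (conv q p i + g i); [apply hrec; lia|].
  apply Rplus_le_compat_r.
  rewrite <- (conv_resolvent q (Qsum q) g i) by (intros m Hm; apply Qsum_renewal; lia).
  apply conv_le_r.
  - intros m Hm. apply hq0. lia.
  - intros m Hm. apply IH; lia.
Qed.
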